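(* Let $(\varPhi,\overline{y})$ be a right normalized skew ruled surface in $\mathbb{E}^3$ with support function $q=\frac{f(u)+g(u)v}{w}$, neither $f$ nor $g$ the zero function. Then the following are equivalent: (a) $\overline{y}$ is a right normalization of the first type, i.e. the relative image $\varPhi^*=(U,\overline{y})$ degenerates into a curve; (b) $(\varPhi,\overline{y})$ is relatively minimal; (c) $g=\int\frac{\kappa f}{\delta}\,\mathrm{d}u+c$ for some $c\in\mathbb{R}$.
   Context: $\varPhi$ is a ruled $C^r$-surface ($r\ge3$) with nonvanishing Gaussian curvature, in standard parameters $\overline{x}(u,v)=\overline{s}(u)+v\,\overline{e}(u)$, $(u,v)\in U=I\times\mathbb{R}$, $|\overline{e}|=|\overline{e}'|=1$, $\langle\overline{s}',\overline{e}'\rangle=0$. Frame $\overline{n}=\overline{e}'$, $\overline{z}=\overline{e}\times\overline{n}$, $\overline{n}'=-\overline{e}+\kappa\overline{z}$, $\overline{z}'=-\kappa\overline{n}$. Invariants: $\delta=(\overline{s}',\overline{e},\overline{e}')\neq0$, $\kappa=(\overline{e},\overline{e}',\overline{e}'')$, $\lambda=\cot\sphericalangle(\overline{e},\overline{s}')$, $\overline{s}'=\delta\lambda\overline{e}+\delta\overline{z}$. $w=\sqrt{\delta^2+v^2}$, $\overline{\xi}=(\delta\overline{n}-v\overline{z})/w$. A relative normalization $\overline{y}$ is determined by its support function $q=\langle\overline{\xi},\overline{y}\rangle\neq0$; the right normalization with $q=(f+gv)/w$ ($f,g$ functions of $u$) is $\overline{y}=\frac{(\kappa f-\delta g')v+\delta'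 f-\delta f'-\delta^2\kappa g}{\delta^2}\overline{e}+\frac{f}{\delta}\overline{n}-g\overline{z}$. The relative shape operator is defined by $\overline{y}_{/i}=-B_i^j\overline{x}_{/j}$, the relative mean curvature is $H=\frac12(B_1^1+B_2^2)$, and $(\varPhi,\overline{y})$ is relatively minimal if $H\equiv0$. $\int\cdots\mathrm{d}u$ denotes an antiderivative. *)

From Stdlib Require Import Reals.
From Coquelicot Require Import Coquelicot.
Open Scope R_scope.

Definition vec3 := (R * R * R)%type.
Definition mkv (a b c : R) : vec3 := (a, b, c).
Definition vx (p : vec3) : R := fst (fst p).
Definition vy (p : vec3) : R := snd (fst p).
Definition vz (p : vec3) : R := snd p.
Definition vzero : vec3 := mkv 0 0 0.
Definition vadd (p q : vec3) : vec3 := mkv (vx p + vx q) (vy p + vy q) (vz p + vz q).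
Definition vscal (k : R) (p : vec3) : vec3 := mkv (k * vx p) (k * vy p) (k * vz p).
Definition vopp (p : vec3) : vec3 := vscal (-1) p.
Definition dot (p q : vec3) : R := vx p * vx q + vy p * vy q + vz p * vz q.
Definition cross (p q : vec3) : vec3 :=
  mkv (vy p * vz q - vz p * vy q) (vz p * vx q - vx p * vz q) (vx p * vy q - vy p * vx q).
Definition det3 (a b c : vec3) : R := dot a (cross b c).

Definition vderiv (c : R -> vec3) (u : R) : vec3 :=
  mkv (Derive (fun t => vx (c t)) u) (Derive (fun t => vy (c t)) u)
      (Derive (fun t => vz (c t)) u).

Definition pu (F : R -> R -> vec3) (u v : R) : vec3 := vderiv (fun t => F t v) u.
Definition pv (F : R -> R -> vec3) (u v : R) : vec3 := vderiv (fun t => F u t) v.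

Definition in_I (a b : Rbar) (u : R) : Prop := Rbar_lt a u /\ Rbar_lt u b.

Definition Ck_at (k : nat) (h : R -> R) (u : R) : Prop :=
  (forall m, (m <= k)%nat -> ex_derive_n h m u) /\ continuous (Derive_n h k) u.
Definition Ck_vec (k : nat) (c : R -> vec3) (u : R) : Prop :=
  Ck_at k (fun t => vx (c t)) u /\ Ck_at k (fun t => vy (c t)) u /\
  Ck_at k (fun t => vz (c t)) u.

Definition nvec (e : R -> vec3) (u : R) : vec3 := vderiv e u.
Definition zvec (e : R -> vec3) (u : R) : vec3 := cross (e u) (nvec e u).
Definition delta (s e : R -> vec3) (u : R) : R := det3 (vderiv s u) (e u) (vderiv e u).
Definition kappa (e : R -> vec3) (u : R) : R := det3 (e u) (vderiv e u) (vderiv (vderiv e) u).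
Definition surf (s e : R -> vec3) (u v : R) : vec3 := vadd (s u) (vscal v (e u)).

(** The right normalization with support function q = (f + g v)/w. *)
Definition rightnorm (s e : R -> vec3) (f g : R -> R) (u v : R) : vec3 :=
  let d := delta s e u in
  let k := kappa e u in
  let d' := Derive (delta s e) u in
  vadd (vscal (((k * f u - d * Derive g u) * v + d' * f u - d * Derive f u
                - d ^ 2 * k * g u) / d ^ 2) (e u))
       (vadd (vscal (f u / d) (nvec e u)) (vscal (- g u) (zvec e u))).

(** Domain of the relatively normalized surface: points of U = I x R where the
    support function q = (f + g v)/w does not vanish. *)
Definition in_dom (a b : Rbar) (f g : R -> R) (u v : R) : Prop :=
  in_I a b u /\ f u + g u * v <> 0.

Definition shape_op (x y : R -> R -> vec3) (u v B11 B12 B21 B22 : R) : Prop :=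
  pu y u v = vopp (vadd (vscal B11 (pu x u v)) (vscal B12 (pv x u v))) /\
  pv y u v = vopp (vadd (vscal B21 (pu x u v)) (vscal B22 (pv x u v))).

Definition relatively_minimal (a b : Rbar) (s e : R -> vec3) (f g : R -> R) : Prop :=
  forall u v, in_dom a b f g u v ->
    exists B11 B12 B21 B22,
      shape_op (surf s e) (rightnorm s e f g) u v B11 B12 B21 B22 /\
      (B11 + B22) / 2 = 0.

(** Right normalization of the first type: the relative image (U, y) degenerates
    into a curve, i.e. y has rank < 2 everywhere (y_u x y_v = 0). *)
Definition first_type (a b : Rbar) (s e : R -> vec3) (f g : R -> R) : Prop :=
  forall u v, in_dom a b f g u v ->
    cross (pu (rightnorm s e f g) u v) (pv (rightnorm s e f g) u v) = vzero.

From Stdlib Require Import Reals Lra Lia.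
From Coquelicot Require Import Coquelicot.
Open Scope R_scope.

(* Let h = [hcoef] = (κ f - δ g') / δ^2.  The e-component of y is affine in v with slope h,
   so y_v = h e.  The frame equations e' = n, n' = -e + κ z, z' = -κ n and ⟨s', n⟩ = 0 give
     x_u = ⟨s', e⟩ e + v n + δ z,   x_v = e,   y_u = (...) e + h v n + h δ z,
   so the relative shape operator is triangular with B_1^1 = B_2^2 = -h, i.e. H = -h, and
   ⟨y_u × y_v, n⟩ = h^2 δ.  Thus (a) and (b) both say that h vanishes wherever q is defined.
   This extends to the whole interval: near a point where h ≠ 0 the support function would
   vanish for every v, so f = g = 0 there, forcing g' = 0 and h = 0.  Finally h = 0 is the
   equation g' = κ f / δ, which is (c). *)

Lemma vec3_ext (p q : vec3) : vx p = vx q -> vy p = vy q -> vz p = vz q -> p = q.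
Proof. destruct p as [[p1 p2] p3], q as [[q1 q2] q3]; unfold vx, vy, vz; simpl; congruence. Qed.

Ltac vec3_unfold := cbv [zvec nvec det3 dot cross vadd vscal vopp vzero mkv vx vy vz fst snd].

Ltac vec3_ring := try apply vec3_ext; vec3_unfold; ring.

Lemma dot_comm p q : dot p q = dot q p.
Proof. vec3_ring. Qed.

Lemma dot_cross_det3 A B C : dot C (cross A B) = det3 A B C.
Proof. vec3_ring. Qed.

Lemma dot_cross_l A B : dot A (cross A B) = 0.
Proof. vec3_ring. Qed.

Lemma dot_cross_scal_r P E N h : dot (cross P (vscal h E)) N = h * dot P (cross E N).
Proof. vec3_ring. Qed.

Lemma cross_cross A B C : cross A (cross B C) = vadd (vscal (dot A C) B) (vscal (- dot A B) C).
Proof. vec3_ring. Qed.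

Lemma orthonormal_decomposition E N P : dot E E = 1 -> dot N N = 1 -> dot E N = 0 ->
  P = vadd (vscal (dot P E) E) (vadd (vscal (dot P N) N) (vscal (dot P (cross E N)) (cross E N))).
Proof.
  intros HE HN HEN.
  assert (Gram : vscal (dot E E * dot N N - dot E N ^ 2) P =
    vadd (vscal (dot P E * dot N N - dot P N * dot E N) E)
      (vadd (vscal (dot P N * dot E E - dot P E * dot E N) N)
         (vscal (dot P (cross E N)) (cross E N)))) by vec3_ring.
  rewrite HE, HN, HEN in Gram.
  transitivity (vscal (1 * 1 - 0 ^ 2) P); [vec3_ring|]. rewrite Gram. vec3_ring.
Qed.

Lemma orthonormal_dot_cross E N al be ga : dot E E = 1 -> dot N N = 1 -> dot E N = 0 ->
  dot (vadd (vscal al E) (vadd (vscal be N) (vscal ga (cross E N)))) (cross E N) = ga.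
Proof.
  intros HE HN HEN.
  transitivity (ga * (dot E E * dot N N - dot E N ^ 2)); [vec3_ring|].
  rewrite HE, HN, HEN. ring.
Qed.

Lemma vcomb_inj P Q W a1 b1 a2 b2 : dot P W <> 0 -> dot Q W = 0 -> dot Q Q <> 0 ->
  vadd (vscal a1 P) (vscal b1 Q) = vadd (vscal a2 P) (vscal b2 Q) -> a1 = a2 /\ b1 = b2.
Proof.
  intros HPW HQW HQQ Heq.
  assert (DW := f_equal (fun X => dot X W) Heq).
  assert (DQ := f_equal (fun X => dot X Q) Heq). simpl in DW, DQ.
  assert (EW : forall a b, dot (vadd (vscal a P) (vscal b Q)) W = a * dot P W + b * dot Q W)
    by (intros; vec3_ring).
  assert (EQ : forall a b, dot (vadd (vscal a P) (vscal b Q)) Q = a * dot P Q + b * dot Q Q)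
    by (intros; vec3_ring).
  rewrite !EW, HQW in DW. rewrite !EQ in DQ.
  assert (a1 = a2) by (apply (Rmult_eq_reg_r (dot P W)); lra). subst a2.
  split; [reflexivity|]. apply (Rmult_eq_reg_r (dot Q Q)); lra.
Qed.

Lemma vopp_inj p q : vopp p = vopp q -> p = q.
Proof.
  intros H. transitivity (vopp (vopp p)); [vec3_ring|]. rewrite H. vec3_ring.
Qed.

Definition is_vderive (c : R -> vec3) (u : R) (L : vec3) : Prop :=
  is_derive (fun t => vx (c t)) u (vx L) /\ is_derive (fun t => vy (c t)) u (vy L) /\
  is_derive (fun t => vz (c t)) u (vz L).

Definition ex_vderive (c : R -> vec3) (u : R) : Prop :=
  ex_derive (fun t => vx (c t)) u /\ ex_derive (fun t => vy (c t)) u /\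
  ex_derive (fun t => vz (c t)) u.

Lemma is_vderive_unique c u L : is_vderive c u L -> vderiv c u = L.
Proof. intros (H1 & H2 & H3). apply vec3_ext; apply is_derive_unique; assumption. Qed.

Lemma vderiv_correct c u : ex_vderive c u -> is_vderive c u (vderiv c u).
Proof. intros (H1 & H2 & H3); split; [|split]; apply Derive_correct; assumption. Qed.

Lemma is_vderive_eq c u L L' : is_vderive c u L -> L = L' -> is_vderive c u L'.
Proof. intros H <-; exact H. Qed.

Lemma is_vderive_const (p : vec3) u : is_vderive (fun _ => p) u vzero.
Proof. split; [|split]; apply (is_derive_const (V := R_NormedModule)). Qed.

Lemma is_vderive_add c d u c' d' : is_vderive c u c' -> is_vderive d u d' ->
  is_vderive (fun t => vadd (c t) (d t)) u (vadd c' d').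
Proof.
  intros (H1 & H2 & H3) (K1 & K2 & K3);
    split; [|split]; apply (is_derive_plus (V := R_NormedModule)); assumption.
Qed.

Lemma is_vderive_scal (k : R -> R) c u k' c' : is_derive k u k' -> is_vderive c u c' ->
  is_vderive (fun t => vscal (k t) (c t)) u (vadd (vscal k' (c u)) (vscal (k u) c')).
Proof.
  intros Hk (H1 & H2 & H3); split; [|split]; apply Derive.is_derive_mult; assumption.
Qed.

Ltac exact_is_derive_up_to_ring D :=
  match type of D with is_derive _ _ ?l0 =>
    match goal with |- is_derive _ _ ?l =>
      replace l with l0; [exact D | unfold minus, plus, opp, mult, zero; simpl; vec3_ring]
    end
  end.

Lemma is_vderive_cross c d u c' d' : is_vderive c u c' -> is_vderive d u d' ->
  is_vderive (fun t => cross (c t) (d t)) u (vadd (cross c' (d u)) (cross (c u) d')).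
Proof.
  intros (H1 & H2 & H3) (K1 & K2 & K3). split; [|split].
  - exact_is_derive_up_to_ring (is_derive_minus _ _ _ _ _
      (Derive.is_derive_mult _ _ _ _ _ H2 K3) (Derive.is_derive_mult _ _ _ _ _ H3 K2)).
  - exact_is_derive_up_to_ring (is_derive_minus _ _ _ _ _
      (Derive.is_derive_mult _ _ _ _ _ H3 K1) (Derive.is_derive_mult _ _ _ _ _ H1 K3)).
  - exact_is_derive_up_to_ring (is_derive_minus _ _ _ _ _
      (Derive.is_derive_mult _ _ _ _ _ H1 K2) (Derive.is_derive_mult _ _ _ _ _ H2 K1)).
Qed.

Lemma is_derive_dot c d u c' d' : is_vderive c u c' -> is_vderive d u d' ->
  is_derive (fun t => dot (c t) (d t)) u (dot c' (d u) + dot (c u) d').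
Proof.
  intros (H1 & H2 & H3) (K1 & K2 & K3).
  exact_is_derive_up_to_ring (is_derive_plus _ _ _ _ _ (is_derive_plus _ _ _ _ _
    (Derive.is_derive_mult _ _ _ _ _ H1 K1) (Derive.is_derive_mult _ _ _ _ _ H2 K2))
    (Derive.is_derive_mult _ _ _ _ _ H3 K3)).
Qed.

Lemma is_derive_locally_const_eq0 (h : R -> R) u c l :
  locally u (fun t => h t = c) -> is_derive h u l -> l = 0.
Proof.
  intros Hc Hh.
  assert (H0 : is_derive h u 0).
  { apply (is_derive_ext_loc (fun _ => c)).
    - apply (filter_imp _ _ (fun t H => eq_sym H) Hc).
    - apply (is_derive_const (V := R_NormedModule)). }
  rewrite <- (is_derive_unique _ _ _ Hh). exact (is_derive_unique _ _ _ H0).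
Qed.

Lemma unit_vderive_orth c u c' :
  locally u (fun t => dot (c t) (c t) = 1) -> is_vderive c u c' -> dot (c u) c' = 0.
Proof.
  intros Hunit Hc.
  assert (H := is_derive_locally_const_eq0 _ _ _ _ Hunit (is_derive_dot _ _ _ _ _ Hc Hc)).
  rewrite (dot_comm c') in H. lra.
Qed.

Lemma locally_in_I {a b : Rbar} {u : R} : in_I a b u -> locally u (in_I a b).
Proof.
  intros [Ha Hb]. apply filter_and; [exact (open_Rbar_gt a u Ha) | exact (open_Rbar_lt b u Hb)].
Qed.

Lemma locally_of_in_I {a b : Rbar} {P : R -> Prop} {u : R} :
  in_I a b u -> (forall t, in_I a b t -> P t) -> locally u P.
Proof. intros Hu HP. exact (filter_imp _ _ HP (locally_in_I Hu)). Qed.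

Lemma continuous_neq0_locally (h : R -> R) u :
  continuous h u -> h u <> 0 -> locally u (fun t => h t <> 0).
Proof. intros Hc Hn. exact (Hc _ (open_neq 0 (h u) Hn)). Qed.

Lemma affine_eq0 p q : (forall v, p + q * v = 0) -> p = 0 /\ q = 0.
Proof. intros H. specialize (H 0) as H0. specialize (H 1). lra. Qed.

Lemma shape_op_unique x y u v W B11 B12 B21 B22 B11' B12' B21' B22' :
  dot (pu x u v) W <> 0 -> dot (pv x u v) W = 0 -> dot (pv x u v) (pv x u v) <> 0 ->
  shape_op x y u v B11 B12 B21 B22 -> shape_op x y u v B11' B12' B21' B22' ->
  B11 = B11' /\ B12 = B12' /\ B21 = B21' /\ B22 = B22'.
Proof.
  intros HuW HvW Hvv [Hu Hv] [Hu' Hv'].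
  rewrite Hu in Hu'. rewrite Hv in Hv'.
  destruct (vcomb_inj _ _ _ _ _ _ _ HuW HvW Hvv (vopp_inj _ _ Hu')).
  destruct (vcomb_inj _ _ _ _ _ _ _ HuW HvW Hvv (vopp_inj _ _ Hv')).
  repeat split; assumption.
Qed.

Definition rn_ecoef (s e : R -> vec3) (f g : R -> R) (v t : R) : R :=
  ((kappa e t * f t - delta s e t * Derive g t) * v + Derive (delta s e) t * f t
   - delta s e t * Derive f t - delta s e t ^ 2 * kappa e t * g t) / delta s e t ^ 2.

Definition hcoef (s e : R -> vec3) (f g : R -> R) (t : R) : R :=
  (kappa e t * f t - delta s e t * Derive g t) / delta s e t ^ 2.

Lemma rn_ecoef_affine s e f g v t :
  rn_ecoef s e f g v t = hcoef s e f g t * v + rn_ecoef s e f g 0 t.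
Proof. unfold hcoef, rn_ecoef, Rdiv. generalize (/ delta s e t ^ 2). intros. ring. Qed.

Lemma surf_pv s e u v : pv (surf s e) u v = e u.
Proof.
  apply is_vderive_unique. eapply is_vderive_eq.
  - apply is_vderive_add; [apply is_vderive_const|].
    apply (is_vderive_scal (fun t => t) (fun _ => e u) v 1);
      [auto_derive; auto | apply is_vderive_const].
  - vec3_ring.
Qed.

Lemma rightnorm_pv s e f g u v : pv (rightnorm s e f g) u v = vscal (hcoef s e f g u) (e u).
Proof.
  apply is_vderive_unique. unfold rightnorm. eapply is_vderive_eq.
  - apply is_vderive_add; [|apply is_vderive_const].
    apply (is_vderive_scal (fun t => rn_ecoef s e f g t u) (fun _ => e u) v (hcoef s e f g u));
      [|apply is_vderive_const].
    apply (is_derive_ext (fun t => hcoef s e f g u * t + rn_ecoef s e f g 0 u)).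
    + intros t. symmetry. apply rn_ecoef_affine.
    + auto_derive; [exact I | ring].
  - vec3_ring.
Qed.

Lemma hcoef_eq0_of_locally s e f g u :
  locally u (fun t => f t = 0 /\ g t = 0) -> hcoef s e f g u = 0.
Proof.
  intros Hfg.
  assert (Hg' : Derive g u = 0).
  { rewrite (Derive_ext_loc g (fun _ => 0)); [apply Derive_const|].
    exact (filter_imp _ _ (fun t H => proj2 H) Hfg). }
  unfold hcoef. rewrite Hg', (proj1 (locally_singleton _ _ Hfg)).
  unfold Rdiv. ring.
Qed.

Set Implicit Arguments.
Record standard_data (a b : Rbar) (s e : R -> vec3) (f g : R -> R) : Prop := {
  std_ex_s : forall t, in_I a b t -> ex_vderive s t;
  std_ex_s' : forall t, in_I a b t -> ex_vderive (vderiv s) t;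
  std_ex_s'' : forall t, in_I a b t -> ex_vderive (vderiv (vderiv s)) t;
  std_ex_e : forall t, in_I a b t -> ex_vderive e t;
  std_ex_n : forall t, in_I a b t -> ex_vderive (nvec e) t;
  std_ex_n' : forall t, in_I a b t -> ex_vderive (vderiv (nvec e)) t;
  std_ex_f : forall t, in_I a b t -> ex_derive f t;
  std_ex_f' : forall t, in_I a b t -> ex_derive (Derive f) t;
  std_ex_g : forall t, in_I a b t -> ex_derive g t;
  std_ex_g' : forall t, in_I a b t -> ex_derive (Derive g) t;
  std_e_unit : forall t, in_I a b t -> dot (e t) (e t) = 1;
  std_n_unit : forall t, in_I a b t -> dot (nvec e t) (nvec e t) = 1;
  std_s'_n : forall t, in_I a b t -> dot (vderiv s t) (nvec e t) = 0;
  std_delta : forall t, in_I a b t -> delta s e t <> 0 }.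
Unset Implicit Arguments.

Section StandardRuledSurface.

Context {a b : Rbar} {s e : R -> vec3} {f g : R -> R}.
Hypothesis std : standard_data a b s e f g.

Lemma dot_e_n {t : R} : in_I a b t -> dot (e t) (nvec e t) = 0.
Proof.
  intros Ht. apply unit_vderive_orth.
  - exact (locally_of_in_I Ht (fun t Ht => std_e_unit std Ht)).
  - exact (vderiv_correct _ _ (std_ex_e std Ht)).
Qed.

Lemma dot_n_n' {t : R} : in_I a b t -> dot (nvec e t) (vderiv (nvec e) t) = 0.
Proof.
  intros Ht. apply unit_vderive_orth.
  - exact (locally_of_in_I Ht (fun t Ht => std_n_unit std Ht)).
  - exact (vderiv_correct _ _ (std_ex_n std Ht)).
Qed.

Lemma dot_e_n' {t : R} : in_I a b t -> dot (e t) (vderiv (nvec e) t) = -1.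
Proof.
  intros Ht.
  assert (H := is_derive_locally_const_eq0 _ _ _ _ (locally_of_in_I Ht (fun t Ht => dot_e_n Ht))
    (is_derive_dot _ _ _ _ _ (vderiv_correct _ _ (std_ex_e std Ht))
                              (vderiv_correct _ _ (std_ex_n std Ht)))).
  change (vderiv e t) with (nvec e t) in H. rewrite (std_n_unit std Ht) in H. lra.
Qed.

Lemma nvec_deriv {t : R} : in_I a b t ->
  vderiv (nvec e) t = vadd (vopp (e t)) (vscal (kappa e t) (zvec e t)).
Proof.
  intros Ht.
  rewrite (orthonormal_decomposition (e t) (nvec e t) (vderiv (nvec e) t))
    by (apply (std_e_unit std Ht) + apply (std_n_unit std Ht) + apply (dot_e_n Ht)).
  rewrite (dot_comm _ (e t)), (dot_comm _ (nvec e t)), (dot_e_n' Ht), (dot_n_n' Ht),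
    dot_cross_det3.
  change (kappa e t) with (det3 (e t) (nvec e t) (vderiv (nvec e) t)). vec3_ring.
Qed.

Lemma zvec_deriv {t : R} : in_I a b t -> is_vderive (zvec e) t (vscal (- kappa e t) (nvec e t)).
Proof.
  intros Ht. eapply is_vderive_eq.
  - apply is_vderive_cross; apply vderiv_correct;
      [exact (std_ex_e std Ht) | exact (std_ex_n std Ht)].
  - rewrite (nvec_deriv Ht).
    transitivity (vscal (kappa e t) (cross (e t) (cross (e t) (nvec e t)))); [vec3_ring|].
    rewrite cross_cross, (std_e_unit std Ht), (dot_e_n Ht). vec3_ring.
Qed.

Lemma delta_deriv {t : R} : in_I a b t ->
  is_derive (delta s e) t (dot (vderiv (vderiv s) t) (zvec e t)).
Proof.
  intros Ht.
  assert (D := is_derive_dot _ _ _ _ _ (vderiv_correct _ _ (std_ex_s' std Ht)) (zvec_deriv Ht)).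
  assert (Hsn : dot (vderiv s t) (vscal (- kappa e t) (nvec e t)) = 0).
  { transitivity (- kappa e t * dot (vderiv s t) (nvec e t)); [vec3_ring|].
    rewrite (std_s'_n std Ht). ring. }
  rewrite Hsn, Rplus_0_r in D. exact D.
Qed.

Lemma ex_derive_delta' {t : R} : in_I a b t -> ex_derive (Derive (delta s e)) t.
Proof.
  intros Ht.
  apply (ex_derive_ext_loc (fun t => dot (vderiv (vderiv s) t) (zvec e t))).
  - apply (locally_of_in_I Ht). intros t' Ht'. symmetry.
    exact (is_derive_unique _ _ _ (delta_deriv Ht')).
  - eexists. apply is_derive_dot;
      [exact (vderiv_correct _ _ (std_ex_s'' std Ht)) | exact (zvec_deriv Ht)].
Qed.

Lemma ex_derive_kappa {t : R} : in_I a b t -> ex_derive (kappa e) t.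
Proof.
  intros Ht. eexists. apply is_derive_dot; [|apply is_vderive_cross]; apply vderiv_correct.
  - exact (std_ex_e std Ht).
  - exact (std_ex_n std Ht).
  - exact (std_ex_n' std Ht).
Qed.

Lemma ex_derive_delta {t : R} : in_I a b t -> ex_derive (delta s e) t.
Proof. intros Ht. eexists. exact (delta_deriv Ht). Qed.

Lemma ex_derive_hcoef {t : R} : in_I a b t -> ex_derive (hcoef s e f g) t.
Proof.
  intros Ht.
  pose proof (ex_derive_kappa Ht). pose proof (ex_derive_delta Ht).
  pose proof (std_ex_f std Ht). pose proof (std_ex_g' std Ht).
  pose proof (pow_nonzero _ 2 (std_delta std Ht)).
  unfold hcoef. auto_derive. repeat split; assumption.
Qed.

Lemma ex_derive_rn_ecoef {t : R} v : in_I a b t -> ex_derive (rn_ecoef s e f g v) t.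
Proof.
  intros Ht.
  pose proof (ex_derive_kappa Ht). pose proof (ex_derive_delta Ht).
  pose proof (ex_derive_delta' Ht).
  pose proof (std_ex_f std Ht). pose proof (std_ex_f' std Ht).
  pose proof (std_ex_g std Ht). pose proof (std_ex_g' std Ht).
  pose proof (pow_nonzero _ 2 (std_delta std Ht)).
  unfold rn_ecoef. auto_derive. repeat split; assumption.
Qed.

Lemma surf_pu {u : R} v : in_I a b u ->
  pu (surf s e) u v = vadd (vscal (dot (vderiv s u) (e u)) (e u))
                        (vadd (vscal v (nvec e u)) (vscal (delta s e u) (zvec e u))).
Proof.
  intros Hu. apply is_vderive_unique. eapply is_vderive_eq.
  - apply is_vderive_add; [exact (vderiv_correct _ _ (std_ex_s std Hu))|].
    apply (is_vderive_scal (fun _ => v) e u 0); [auto_derive; auto|].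
    exact (vderiv_correct _ _ (std_ex_e std Hu)).
  - (* Only the [s'] of [x_u] is expanded, not the one in the [e]-coefficient. *)
    rewrite (orthonormal_decomposition (e u) (nvec e u) (vderiv s u)) at 1
      by (apply (std_e_unit std Hu) + apply (std_n_unit std Hu) + apply (dot_e_n Hu)).
    rewrite (std_s'_n std Hu). unfold delta. vec3_ring.
Qed.

Lemma rightnorm_pu {u : R} v : in_I a b u ->
  pu (rightnorm s e f g) u v =
  vadd (vscal (Derive (rn_ecoef s e f g v) u - f u / delta s e u) (e u))
    (vadd (vscal (hcoef s e f g u * v) (nvec e u))
       (vscal (hcoef s e f g u * delta s e u) (zvec e u))).
Proof.
  intros Hu. apply is_vderive_unique. unfold rightnorm. eapply is_vderive_eq.
  - apply is_vderive_add; [|apply is_vderive_add].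
    + apply (is_vderive_scal (rn_ecoef s e f g v));
        [apply Derive_correct, (ex_derive_rn_ecoef v Hu)|].
      exact (vderiv_correct _ _ (std_ex_e std Hu)).
    + apply (is_vderive_scal (fun t => f t / delta s e t)).
      * apply is_derive_div; [apply Derive_correct, (std_ex_f std Hu)
          | apply Derive_correct, (ex_derive_delta Hu) | exact (std_delta std Hu)].
      * exact (vderiv_correct _ _ (std_ex_n std Hu)).
    + apply (is_vderive_scal (fun t => - g t) (zvec e) u (- Derive g u)); [|exact (zvec_deriv Hu)].
      auto_derive; [exact (std_ex_g std Hu) | rewrite Rmult_1_l; reflexivity].
  - rewrite (nvec_deriv Hu). unfold hcoef, rn_ecoef.
    apply vec3_ext; vec3_unfold; field; exact (std_delta std Hu).
Qed.

Lemma shape_op_rightnorm {u : R} v : in_I a b u ->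
  shape_op (surf s e) (rightnorm s e f g) u v
    (- hcoef s e f g u)
    (hcoef s e f g u * dot (vderiv s u) (e u) - (Derive (rn_ecoef s e f g v) u - f u / delta s e u))
    0 (- hcoef s e f g u).
Proof.
  intros Hu. split.
  - rewrite (rightnorm_pu v Hu), (surf_pu v Hu), surf_pv. vec3_ring.
  - rewrite rightnorm_pv, (surf_pu v Hu), surf_pv. vec3_ring.
Qed.

Lemma relative_mean_curvature {u : R} v B11 B12 B21 B22 : in_I a b u ->
  shape_op (surf s e) (rightnorm s e f g) u v B11 B12 B21 B22 ->
  (B11 + B22) / 2 = - hcoef s e f g u.
Proof.
  intros Hu HB.
  assert (Hxu : dot (pu (surf s e) u v) (zvec e u) <> 0).
  { rewrite (surf_pu v Hu), orthonormal_dot_cross;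
      [exact (std_delta std Hu) | exact (std_e_unit std Hu) | exact (std_n_unit std Hu)
      | exact (dot_e_n Hu)]. }
  assert (Hxv : dot (pv (surf s e) u v) (zvec e u) = 0) by (rewrite surf_pv; apply dot_cross_l).
  assert (Hxvv : dot (pv (surf s e) u v) (pv (surf s e) u v) <> 0).
  { rewrite surf_pv, (std_e_unit std Hu). exact R1_neq_R0. }
  destruct (shape_op_unique _ _ _ _ _ _ _ _ _ _ _ _ _ Hxu Hxv Hxvv HB (shape_op_rightnorm v Hu))
    as (-> & _ & _ & ->).
  field.
Qed.

Lemma minimal_at_iff {u : R} v : in_I a b u ->
  (exists B11 B12 B21 B22,
     shape_op (surf s e) (rightnorm s e f g) u v B11 B12 B21 B22 /\ (B11 + B22) / 2 = 0) <->
  hcoef s e f g u = 0.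
Proof.
  intros Hu. split.
  - intros (B11 & B12 & B21 & B22 & HB & H0).
    rewrite (relative_mean_curvature v _ _ _ _ Hu HB) in H0. lra.
  - intros H0. do 4 eexists. split; [exact (shape_op_rightnorm v Hu)|]. rewrite H0. field.
Qed.

Lemma first_type_at_iff {u : R} v : in_I a b u ->
  cross (pu (rightnorm s e f g) u v) (pv (rightnorm s e f g) u v) = vzero <->
  hcoef s e f g u = 0.
Proof.
  intros Hu. rewrite rightnorm_pv. split.
  - intros H0.
    assert (Hn := f_equal (fun w => dot w (nvec e u)) H0). simpl in Hn.
    rewrite dot_cross_scal_r, (rightnorm_pu v Hu), orthonormal_dot_cross in Hn;
      [| exact (std_e_unit std Hu) | exact (std_n_unit std Hu) | exact (dot_e_n Hu)].
    replace (dot vzero (nvec e u)) with 0 in Hn by vec3_ring.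
    destruct (Rmult_integral _ _ Hn) as [|Hh]; [assumption|].
    destruct (Rmult_integral _ _ Hh) as [|Hd]; [assumption|].
    contradiction (std_delta std Hu).
  - intros ->. vec3_ring.
Qed.

Lemma hcoef_eq0_on_I :
  (forall u v, in_dom a b f g u v -> hcoef s e f g u = 0) ->
  forall u, in_I a b u -> hcoef s e f g u = 0.
Proof.
  intros Hdom u Hu. destruct (Req_dec (hcoef s e f g u) 0) as [|Hh]; [assumption|].
  apply hcoef_eq0_of_locally.
  assert (Hnear := continuous_neq0_locally _ _ (ex_derive_continuous _ _ (ex_derive_hcoef Hu)) Hh).
  refine (filter_imp _ _ _ (filter_and _ _ Hnear (locally_in_I Hu))).
  intros t [Ht0 Ht]. apply affine_eq0. intros v.
  destruct (Req_dec (f t + g t * v) 0) as [|Hv]; [assumption|].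
  contradiction (Ht0 (Hdom t v (conj Ht Hv))).
Qed.

Lemma first_type_iff : first_type a b s e f g <-> forall u, in_I a b u -> hcoef s e f g u = 0.
Proof.
  split.
  - intros Hft. apply hcoef_eq0_on_I. intros u v [Hu Hv].
    exact (proj1 (first_type_at_iff v Hu) (Hft u v (conj Hu Hv))).
  - intros H0 u v [Hu _]. exact (proj2 (first_type_at_iff v Hu) (H0 u Hu)).
Qed.

Lemma relatively_minimal_iff :
  relatively_minimal a b s e f g <-> forall u, in_I a b u -> hcoef s e f g u = 0.
Proof.
  split.
  - intros Hmin. apply hcoef_eq0_on_I. intros u v [Hu Hv].
    exact (proj1 (minimal_at_iff v Hu) (Hmin u v (conj Hu Hv))).
  - intros H0 u v [Hu _]. exact (proj2 (minimal_at_iff v Hu) (H0 u Hu)).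
Qed.

Lemma hcoef_eq0_iff_is_derive {u : R} : in_I a b u ->
  hcoef s e f g u = 0 <-> is_derive g u (kappa e u * f u / delta s e u).
Proof.
  intros Hu. assert (Hd := std_delta std Hu). split.
  - intros H0.
    assert (Hfg : kappa e u * f u - delta s e u * Derive g u = 0).
    { transitivity (hcoef s e f g u * delta s e u ^ 2); [unfold hcoef; field; exact Hd|].
      rewrite H0. ring. }
    replace (kappa e u * f u) with (delta s e u * Derive g u) by lra.
    replace (delta s e u * Derive g u / delta s e u) with (Derive g u) by (field; exact Hd).
    exact (Derive_correct _ _ (std_ex_g std Hu)).
  - intros Hg. unfold hcoef. rewrite (is_derive_unique _ _ _ Hg). field. exact Hd.
Qed.

Lemma hcoef_eq0_iff_primitive :
  (forall u, in_I a b u -> hcoef s e f g u = 0) <->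
  exists (G : R -> R) (c : R),
    (forall u, in_I a b u -> is_derive G u (kappa e u * f u / delta s e u)) /\
    (forall u, in_I a b u -> g u = G u + c).
Proof.
  split.
  - intros H0. exists g, 0. split.
    + intros u Hu. exact (proj1 (hcoef_eq0_iff_is_derive Hu) (H0 u Hu)).
    + intros u _. ring.
  - intros (G & c & HG & Hg) u Hu. apply (hcoef_eq0_iff_is_derive Hu).
    apply (is_derive_ext_loc (fun t => G t + c)).
    + apply (locally_of_in_I Hu). intros t Ht. symmetry. exact (Hg t Ht).
    + exact_is_derive_up_to_ring (is_derive_plus _ _ _ _ _ (HG u Hu)
        (is_derive_const (V := R_NormedModule) c u)).
Qed.

End StandardRuledSurface.

Lemma Ck_at_ex_derive k h t m : Ck_at k h t -> (m < k)%nat -> ex_derive (Derive_n h m) t.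
Proof. intros [H _] Hm. exact (H (S m) Hm). Qed.

Lemma Ck_vec_ex_vderive k c t : (3 <= k)%nat -> Ck_vec k c t ->
  ex_vderive c t /\ ex_vderive (vderiv c) t /\ ex_vderive (vderiv (vderiv c)) t.
Proof.
  intros Hk (Hx & Hy & Hz).
  assert (D : forall m, (m < 3)%nat ->
    ex_derive (Derive_n (fun t => vx (c t)) m) t /\ ex_derive (Derive_n (fun t => vy (c t)) m) t /\
    ex_derive (Derive_n (fun t => vz (c t)) m) t).
  { intros m Hm. split; [|split]; apply Ck_at_ex_derive with k; (assumption || lia). }
  exact (conj (D 0%nat ltac:(lia)) (conj (D 1%nat ltac:(lia)) (D 2%nat ltac:(lia)))).
Qed.

Lemma standard_data_of_Ck (a b : Rbar) (r : nat) (s e : R -> vec3) (f g : R -> R) :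
  (3 <= r)%nat ->
  (forall u, in_I a b u -> Ck_vec r s u /\ Ck_vec r e u) ->
  (forall u, in_I a b u -> Ck_at 2 f u /\ Ck_at 2 g u) ->
  (forall u, in_I a b u ->
     dot (e u) (e u) = 1 /\ dot (nvec e u) (nvec e u) = 1 /\
     dot (vderiv s u) (vderiv e u) = 0) ->
  (forall u, in_I a b u -> delta s e u <> 0) ->
  standard_data a b s e f g.
Proof.
  intros Hr Hse Hfg Hframe Hdelta.
  split; intros t Ht;
    destruct (Hse t Ht) as [Hs He];
    destruct (Ck_vec_ex_vderive _ _ _ Hr Hs) as (Hs0 & Hs1 & Hs2);
    destruct (Ck_vec_ex_vderive _ _ _ Hr He) as (He0 & He1 & He2);
    destruct (Hfg t Ht) as [Hf Hg];
    destruct (Hframe t Ht) as (He_unit & Hn_unit & Hs'n);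
    first [ assumption | exact (Hdelta t Ht)
          | exact (Ck_at_ex_derive _ _ _ 0 Hf ltac:(lia))
          | exact (Ck_at_ex_derive _ _ _ 1 Hf ltac:(lia))
          | exact (Ck_at_ex_derive _ _ _ 0 Hg ltac:(lia))
          | exact (Ck_at_ex_derive _ _ _ 1 Hg ltac:(lia)) ].
Qed.

Theorem proposition3 (a b : Rbar) (r : nat) (s e : R -> vec3) (f g : R -> R) :
  (3 <= r)%nat ->
  (forall u, in_I a b u -> Ck_vec r s u /\ Ck_vec r e u) ->
  (forall u, in_I a b u -> Ck_at 2 f u /\ Ck_at 2 g u) ->
  (forall u, in_I a b u ->
     dot (e u) (e u) = 1 /\ dot (nvec e u) (nvec e u) = 1 /\
     dot (vderiv s u) (vderiv e u) = 0) ->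
  (forall u, in_I a b u -> delta s e u <> 0) ->
  (exists u, in_I a b u /\ f u <> 0) ->
  (exists u, in_I a b u /\ g u <> 0) ->
  (first_type a b s e f g <-> relatively_minimal a b s e f g) /\
  (relatively_minimal a b s e f g <->
     exists (G : R -> R) (c : R),
       (forall u, in_I a b u -> is_derive G u (kappa e u * f u / delta s e u)) /\
       (forall u, in_I a b u -> g u = G u + c)).
Proof.
  intros Hr Hse Hfg Hframe Hdelta _ _.
  pose proof (standard_data_of_Ck a b r s e f g Hr Hse Hfg Hframe Hdelta) as std.
  pose proof (first_type_iff std) as Hft.
  pose proof (relatively_minimal_iff std) as Hmin.
  pose proof (hcoef_eq0_iff_primitive std) as Hprim.
  tauto.
Qed.
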